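(* Define finite blocks of positive reals as follows: $b_1=(\tfrac12)$, $b_2=(2)$, $b_3=(\tfrac12)$; for $n\ge3$ let $s_n=\sum_{i=2}^n|b_i|$ where $|b_i|$ is the length of $b_i$; for even $n\ge4$, $b_n$ consists of $s_{n-1}$ copies of $2$; for odd $n\ge5$, $b_n$ consists of a $\tfrac12$ followed by $s_{n-2}-1$ repetitions of the string ($s_{n-1}$ copies of $1$, then one $\tfrac12$). Let $w=(w_n)_{n\ge0}$ be the concatenation $b_1b_2b_3\cdots$ (so $w_0$ is the entry of $b_1$, and the blocks $b_2,\dots,b_n$ occupy the indices $1,\dots,s_n$). For $i,j\ge1$ put $M_i^j=w_iw_{i+1}\cdots w_{i+j-1}$, and put $n_k=s_{2k+2}$. Then: (a) $M_1^{s_{2k+1}}=1$ for all $k\ge1$; (b) for all $k\ge2$: $M_i^{n_k}\ge\tfrac12$ whenever $i>s_{2k+1}$, and $M_i^{n_k}\ge 2^k$ whenever $1\le i\le s_{2k+1}$; (c) on $X=c_0$ or $X=\ell^p$ ($1\le p<\infty$), the weighted backward shift $B_w$ is surjective, not mixing, strongly topologically transitive, and the forward shift $S$ satisfies $S^{n_k}x\to0$ as $k\to\infty$ for every $x\in X$.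
   Context: For a bounded sequence $w=(w_n)_{n\ge0}$ of positive numbers, the weighted backward shift $B_w$ on $X$ is defined on the canonical basis $(e_n)_{n\ge0}$ by $B_we_0=0$, $B_we_n=w_ne_{n-1}$ ($n\ge1$). When $\sup_n 1/w_n<\infty$, the associated forward shift $S$ is the bounded operator with $Se_n=e_{n+1}/w_{n+1}$; it satisfies $B_wS=I$. For an operator $T$ and nonempty open $U,V$, $N(U,V)=\{n\in\mathbb{N}_0:T^n(U)\cap V\ne\emptyset\}$; $T$ is mixing if every $N(U,V)$ is cofinite; $T$ is strongly topologically transitive if for every nonempty open $U$, $X\setminus\{0\}\subseteq\bigcup_{n\ge0}T^n(U)$. *)

From Stdlib Require Import Reals Lra Lia List.
From Coquelicot Require Import Coquelicot.
Import ListNotations.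
Open Scope R_scope.

(** [sfrom bs m] = sum_{i=2}^m |b_i|, where bs = [b_1; ...; b_N] (1-indexed blocks). *)
Fixpoint sfrom (bs : list (list R)) (m : nat) : nat :=
  match m with
  | O => O
  | S O => O
  | S m' => (sfrom bs m' + length (nth m' bs []))%nat
  end.

(** The n-th block, computed from the list of previous blocks bs = [b_1;...;b_(n-1)]. *)
Definition newblock (n : nat) (bs : list (list R)) : list R :=
  match n with
  | 1%nat => [/2]
  | 2%nat => [2]
  | 3%nat => [/2]
  | _ =>
    if Nat.even n then repeat 2 (sfrom bs (n - 1))
    else (/2) :: concat (repeat (repeat 1 (sfrom bs (n - 1)) ++ [/2])
                                (sfrom bs (n - 2) - 1))
  end.

Fixpoint allb (n : nat) : list (list R) :=
  match n with
  | O => []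
  | S n' => allb n' ++ [newblock n (allb n')]
  end.

Definition b (n : nat) : list R := nth (n - 1) (allb n) [].

Definition s (n : nat) : nat := sfrom (allb n) n.

(** w_j = j-th entry (0-indexed) of b_1 b_2 b_3 ...; the prefix b_1...b_(j+1)
    already has length 1 + s_(j+1) >= j+1. *)
Definition w (j : nat) : R := nth j (concat (allb (S j))) 0.

Fixpoint M (i j : nat) : R :=
  match j with
  | O => 1
  | S j' => w i * M (S i) j'
  end.

Definition nk (k : nat) : nat := s (2 * k + 2).

Inductive space := C0 | Lp (p : R).

Definition valid_space (X : space) : Prop :=
  match X with C0 => True | Lp p => 1 <= p end.

(** a^p for a >= 0, with 0^p = 0. *)
Definition rpow (a p : R) : R := if Rle_dec a 0 then 0 else Rpower a p.

Definition inX (X : space) (x : nat -> R) : Prop :=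
  match X with
  | C0 => is_lim_seq x 0
  | Lp p => ex_series (fun n => rpow (Rabs (x n)) p)
  end.

Definition normX (X : space) (x : nat -> R) : R :=
  match X with
  | C0 => real (Sup_seq (fun n => Rabs (x n)))
  | Lp p => rpow (Series (fun n => rpow (Rabs (x n)) p)) (/ p)
  end.

Definition seq_sub (x y : nat -> R) : nat -> R := fun n => x n - y n.
Definition zero_seq : nat -> R := fun _ => 0.

Definition openX (X : space) (U : (nat -> R) -> Prop) : Prop :=
  (forall x, U x -> inX X x) /\
  (forall x, U x -> exists eps, 0 < eps /\
     forall y, inX X y -> normX X (seq_sub y x) < eps -> U y).

Definition Bw (x : nat -> R) : nat -> R := fun n => w (S n) * x (S n).

Definition Fw (x : nat -> R) : nat -> R :=
  fun n => match n with O => 0 | S m => x m / w (S m) end.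

Definition surjective_on (X : space) (T : (nat -> R) -> (nat -> R)) : Prop :=
  forall y, inX X y -> exists x, inX X x /\ T x = y.

Definition in_N (T : (nat -> R) -> (nat -> R)) (U V : (nat -> R) -> Prop) (n : nat) : Prop :=
  exists x, U x /\ V (Nat.iter n T x).

Definition mixing (X : space) (T : (nat -> R) -> (nat -> R)) : Prop :=
  forall U V, openX X U -> openX X V -> (exists x, U x) -> (exists x, V x) ->
    exists N, forall n, (N <= n)%nat -> in_N T U V n.

Definition strongly_transitive (X : space) (T : (nat -> R) -> (nat -> R)) : Prop :=
  forall U, openX X U -> (exists x, U x) ->
    forall y, inX X y -> y <> zero_seq ->
      exists n x, U x /\ Nat.iter n T x = y.

From Stdlib Require Import Reals.
From Coquelicot Require Import Coquelicot.
From Stdlib Require Import Lra Lia List FunctionalExtensionality.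
Import ListNotations.
Open Scope R_scope.

(** The weights [w] take the values [2], [1] and [1/2] only, and are arranged in blocks
    [b_n] whose lengths grow so fast that the relevant products [M_i^j] of consecutive
    weights can be computed exactly.

    - Combinatorics of the blocks: the recursions for [s_n], the explicit values of [w]
      inside each block, and the positions of the weights [1/2]; beyond [s_(2k+1)] these are
      more than [n_k] apart.
    - Products of weights: the prefix products [M_1^m] are computed block by block, which
      gives part (a) and the upper/lower bounds behind the second half of part (b); the
      separation of the weights [1/2] gives the first half of part (b).
    - Analysis in [X = c_0] or [l^p]: by part (b), [F_w^(n_k)] divides the first
      [s_(2k+1)] coordinates by at least [2^k] and the others by at least [1/2], so
      [F_w^(n_k) y -> 0] for every [y]; the same estimates show that
      [correction u y k = F_w^(n_k) y - (u truncated below n_k)] is small, while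
      [B_w^(n_k) (u + correction u y k) = y]. This yields strong transitivity, and part (a)
      ([(B_w^(s_(2k+1)) x)_0 = x_(s_(2k+1))]) rules out mixing. *)

(** ** The blocks and the lengths [s_n] *)

Lemma allb_length n : length (allb n) = n.
Proof. induction n as [|n IH]; [reflexivity|]. simpl. rewrite length_app, IH. simpl. lia. Qed.

Lemma allb_nth_stable n m i d : (n <= m)%nat -> (i < n)%nat ->
  nth i (allb m) d = nth i (allb n) d.
Proof.
  intros Hnm Hi. induction Hnm as [|m Hnm IH]; [reflexivity|].
  simpl. rewrite app_nth1; [exact IH|]. rewrite allb_length. lia.
Qed.

Lemma b_eq n : b (S n) = newblock (S n) (allb n).
Proof.
  unfold b. replace (S n - 1)%nat with n by lia. simpl.
  rewrite app_nth2, allb_length, Nat.sub_diag by (rewrite allb_length; lia). reflexivity.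
Qed.

Lemma sfrom_ext bs1 bs2 m : (forall i, (i < m)%nat -> nth i bs1 [] = nth i bs2 []) ->
  sfrom bs1 m = sfrom bs2 m.
Proof.
  induction m as [|[|m] IH]; intros H; [reflexivity|reflexivity|].
  change (sfrom bs1 (S m) + length (nth (S m) bs1 []) = sfrom bs2 (S m) + length (nth (S m) bs2 []))%nat.
  rewrite IH, H; [reflexivity|lia|]. intros i Hi; apply H; lia.
Qed.

Lemma sfrom_allb n m : (m <= n)%nat -> sfrom (allb n) m = s m.
Proof.
  intros Hmn. apply sfrom_ext. intros i Hi. apply allb_nth_stable; lia.
Qed.

Lemma s_S m : (1 <= m)%nat -> s (S m) = (s m + length (b (S m)))%nat.
Proof.
  intros Hm. destruct m as [|m]; [lia|]. unfold s at 1.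
  change (sfrom (allb (S (S m))) (S m) + length (nth (S m) (allb (S (S m))) []) = s (S m) + length (b (S (S m))))%nat.
  rewrite sfrom_allb by lia. unfold b. replace (S (S m) - 1)%nat with (S m) by lia. reflexivity.
Qed.

Lemma s_1 : s 1 = 0%nat. Proof. reflexivity. Qed.
Lemma b_2 : b 2 = [2]. Proof. reflexivity. Qed.
Lemma b_3 : b 3 = [/2]. Proof. reflexivity. Qed.
Lemma s_2 : s 2 = 1%nat. Proof. rewrite s_S, b_2 by lia. reflexivity. Qed.
Lemma s_3 : s 3 = 2%nat. Proof. rewrite s_S, b_3, s_2 by lia. reflexivity. Qed.

Lemma b_large m : b (4 + m) =
  if Nat.even m then repeat 2 (s (m + 3))
  else (/2) :: concat (repeat (repeat 1 (s (m + 3)) ++ [/2]) (s (m + 2) - 1)).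
Proof.
  replace (4 + m)%nat with (S (S (S (S m)))) by lia. rewrite b_eq. cbn [newblock].
  replace (Nat.even (S (S (S (S m))))) with (Nat.even m) by reflexivity.
  replace (S (S (S (S m))) - 1)%nat with (m + 3)%nat by lia.
  replace (S (S (S (S m))) - 2)%nat with (m + 2)%nat by lia.
  rewrite !sfrom_allb by lia. reflexivity.
Qed.

Lemma b_even j : b (2*j+4) = repeat 2 (s (2*j+3)).
Proof.
  replace (2*j+4)%nat with (4 + 2*j)%nat by lia. rewrite b_large, Nat.even_mul. reflexivity.
Qed.

Lemma b_odd j : b (2*j+5) =
  (/2) :: concat (repeat (repeat 1 (s (2*j+4)) ++ [/2]) (s (2*j+3) - 1)).
Proof.
  replace (2*j+5)%nat with (4 + (2*j+1))%nat by lia. rewrite b_large.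
  replace (Nat.even (2*j+1)) with false by (rewrite Nat.even_add, Nat.even_mul; reflexivity).
  replace (2*j+1+3)%nat with (2*j+4)%nat by lia. replace (2*j+1+2)%nat with (2*j+3)%nat by lia.
  reflexivity.
Qed.

Lemma length_concat_repeat {A} (l : list A) r :
  length (concat (repeat l r)) = (r * length l)%nat.
Proof. induction r as [|r IH]; [reflexivity|]. simpl. rewrite length_app, IH. lia. Qed.

Lemma s_even j : s (2*j+4) = (2 * s (2*j+3))%nat.
Proof.
  replace (2*j+4)%nat with (S (2*j+3)) by lia. rewrite s_S by lia.
  replace (S (2*j+3)) with (2*j+4)%nat by lia.
  rewrite b_even, repeat_length. lia.
Qed.

Lemma s_odd j :
  s (2*j+5) = (s (2*j+4) + 1 + (s (2*j+3) - 1) * (s (2*j+4) + 1))%nat.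
Proof.
  replace (2*j+5)%nat with (S (2*j+4)) by lia. rewrite s_S by lia.
  replace (S (2*j+4)) with (2*j+5)%nat by lia.
  rewrite b_odd. cbn [length]. rewrite length_concat_repeat, length_app, repeat_length.
  cbn [length]. lia.
Qed.

Lemma s_odd_lower j : (j + 2 <= s (2*j+3))%nat.
Proof.
  induction j as [|j IH]; [change (2*0+3)%nat with 3%nat; rewrite s_3; lia|].
  replace (2 * S j + 3)%nat with (2*j+5)%nat by lia. rewrite s_odd, s_even. nia.
Qed.

Lemma length_b_pos n : (1 <= n)%nat -> (1 <= length (b n))%nat.
Proof.
  intros Hn. destruct (Nat.lt_ge_cases n 4) as [Hlt|Hge].
  - destruct n as [|[|[|[|]]]]; try lia; reflexivity.
  - destruct (Nat.Even_or_Odd (n - 4)) as [[j Hj]|[j Hj]].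
    + replace n with (2*j+4)%nat by lia. rewrite b_even, repeat_length.
      pose proof (s_odd_lower j). lia.
    + replace n with (2*j+5)%nat by lia. rewrite b_odd. simpl. lia.
Qed.

Lemma s_le m n : (m <= n)%nat -> (s m <= s n)%nat.
Proof.
  induction 1 as [|n _ IH]; [lia|].
  destruct n as [|n]; [change (s 1) with (s 0); exact IH|].
  rewrite s_S by lia. lia.
Qed.

Lemma s_ge n : (n - 1 <= s n)%nat.
Proof.
  induction n as [|[|n] IH]; [reflexivity|reflexivity|].
  rewrite s_S by lia. pose proof (length_b_pos (S (S n))). lia.
Qed.

Lemma locate x : (1 <= x)%nat -> exists n, (2 <= n)%nat /\ (s (n-1) < x <= s n)%nat.
Proof.
  induction x as [|[|x] IH]; intros Hx; [lia| |].
  - exists 2%nat. rewrite s_2. simpl. rewrite s_1. lia.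
  - destruct IH as [n [Hn [H1 H2]]]; [lia|].
    destruct (Nat.eq_dec (S x) (s n)) as [E|E].
    + exists (S n). replace (S n - 1)%nat with n by lia. rewrite s_S by lia.
      pose proof (length_b_pos (S n)). lia.
    + exists n. lia.
Qed.

Lemma allb_prefix n d : exists L, allb (n + d) = allb n ++ L.
Proof.
  induction d as [|d [L HL]]; [exists []; rewrite Nat.add_0_r, app_nil_r; reflexivity|].
  rewrite Nat.add_succ_r. simpl. rewrite HL. eexists. rewrite <- app_assoc. reflexivity.
Qed.

Lemma length_concat_allb n : (1 <= n)%nat -> length (concat (allb n)) = (1 + s n)%nat.
Proof.
  induction n as [|[|n] IH]; intros Hn; [lia|reflexivity|].
  change (allb (S (S n))) with (allb (S n) ++ [newblock (S (S n)) (allb (S n))]).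
  rewrite <- b_eq, concat_app, length_app, IH, (s_S (S n)) by lia.
  simpl concat. rewrite app_nil_r. lia.
Qed.

Lemma w_concat N x : (x < length (concat (allb N)))%nat -> w x = nth x (concat (allb N)) 0.
Proof.
  intros Hx. unfold w.
  destruct (allb_prefix N (S x)) as [L1 H1], (allb_prefix (S x) N) as [L2 H2].
  assert (Hx' : (x < length (concat (allb (S x))))%nat).
  { rewrite length_concat_allb by lia. pose proof (s_ge (S x)). lia. }
  transitivity (nth x (concat (allb (N + S x))) 0).
  - rewrite Nat.add_comm, H2, concat_app, app_nth1 by exact Hx'. reflexivity.
  - rewrite H1, concat_app, app_nth1 by exact Hx. reflexivity.
Qed.

Lemma w_block n t : (2 <= n)%nat -> (t < length (b n))%nat ->
  w (1 + s (n-1) + t) = nth t (b n) 0.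
Proof.
  intros Hn Ht. destruct n as [|n]; [lia|]. replace (S n - 1)%nat with n by lia.
  assert (Hc : concat (allb (S n)) = concat (allb n) ++ b (S n)).
  { rewrite b_eq. simpl. rewrite concat_app. simpl. rewrite app_nil_r. reflexivity. }
  rewrite (w_concat (S n)).
  - rewrite Hc, app_nth2; rewrite length_concat_allb by lia; [f_equal; lia|lia].
  - rewrite length_concat_allb, s_S by lia. lia.
Qed.

Definition weight_value (v : R) : Prop := v = 2 \/ v = 1 \/ v = /2.

Lemma newblock_weights n bs : Forall weight_value (newblock n bs).
Proof.
  assert (Hrep : forall (A : Type) (P : A -> Prop) v k, P v -> Forall P (repeat v k)).
  { intros A P v k Hv. apply Forall_forall. intros x Hx. apply repeat_spec in Hx. subst. exact Hv. }
  assert (Hhalf : weight_value (/2)) by (right; right; reflexivity).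
  assert (Hone : weight_value 1) by (right; left; reflexivity).
  assert (Htwo : weight_value 2) by (left; reflexivity).
  unfold newblock. destruct n as [|[|[|[|n]]]];
    try (constructor; [exact Hhalf || exact Htwo|constructor]);
    destruct (Nat.even _); try (apply Hrep; exact Htwo).
  all: constructor; [exact Hhalf|]; apply Forall_concat, Hrep, Forall_app;
    split; [apply Hrep; exact Hone|constructor; [exact Hhalf|constructor]].
Qed.

Lemma w_value x : weight_value (w x).
Proof.
  assert (Hall : forall n, Forall weight_value (concat (allb n))).
  { induction n as [|n IH]; [constructor|].
    change (allb (S n)) with (allb n ++ [newblock (S n) (allb n)]). rewrite concat_app.
    apply Forall_app. split; [exact IH|].
    apply Forall_concat. constructor; [apply newblock_weights|constructor]. }
  unfold w. apply (proj1 (Forall_nth _ _) (Hall (S x))).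
  rewrite length_concat_allb by lia. pose proof (s_ge (S x)). lia.
Qed.

Lemma w_bounds x : /2 <= w x <= 2.
Proof. destruct (w_value x) as [H|[H|H]]; rewrite H; lra. Qed.

Lemma nth_concat_repeat {A} (l : list A) r c d x : (c < r)%nat -> (d < length l)%nat ->
  nth (c * length l + d) (concat (repeat l r)) x = nth d l x.
Proof.
  revert r. induction c as [|c IH]; intros [|r] Hc Hd; try lia; simpl.
  - rewrite app_nth1 by lia. reflexivity.
  - rewrite app_nth2 by lia.
    replace (length l + c * length l + d - length l)%nat with (c * length l + d)%nat by lia.
    apply IH; lia.
Qed.

Lemma w_1 : w 1 = 2.
Proof. exact (w_block 2 0 (le_n 2) (le_n 1)). Qed.

Lemma w_2 : w 2 = /2.
Proof. pose proof (w_block 3 0) as H. cbn [Nat.sub] in H. rewrite s_2 in H. apply H; simpl; lia. Qed.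

Lemma w_even j t : (t < s (2*j+3))%nat -> w (1 + s (2*j+3) + t) = 2.
Proof.
  intros Ht. pose proof (w_block (2*j+4) t) as H.
  replace (2*j+4-1)%nat with (2*j+3)%nat in H by lia.
  rewrite H, b_even by (rewrite ?b_even, ?repeat_length; lia). apply nth_repeat_lt. exact Ht.
Qed.

Lemma w_odd_start j : w (1 + s (2*j+4)) = /2.
Proof.
  pose proof (w_block (2*j+5) 0) as H.
  replace (2*j+5-1)%nat with (2*j+4)%nat in H by lia. rewrite Nat.add_0_r in H.
  rewrite H, b_odd by (rewrite ?b_odd; simpl; lia). reflexivity.
Qed.

Lemma w_odd j c d : (c < s (2*j+3) - 1)%nat -> (d <= s (2*j+4))%nat ->
  w (2 + s (2*j+4) + c * (s (2*j+4) + 1) + d) = if Nat.eqb d (s (2*j+4)) then /2 else 1.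
Proof.
  intros Hc Hd. set (a := s (2*j+4)) in *.
  pose proof (w_block (2*j+5) (1 + c * (a + 1) + d)) as H.
  replace (2*j+5-1)%nat with (2*j+4)%nat in H by lia. fold a in H.
  replace (2 + a + c * (a + 1) + d)%nat with (1 + a + (1 + c * (a + 1) + d))%nat by lia.
  rewrite H, b_odd; fold a.
  2: lia.
  2: rewrite b_odd; cbn [length]; rewrite length_concat_repeat, length_app, repeat_length;
     cbn [length]; nia.
  pose proof (nth_concat_repeat (repeat 1 a ++ [/2]) (s (2*j+3) - 1) c d 0 Hc) as E.
  rewrite length_app, repeat_length in E. simpl length in E.
  replace (1 + c * (a + 1) + d)%nat with (S (c * (a + 1) + d)) by lia.
  replace (a + 1)%nat with (S a) in * by lia. cbn [nth]. rewrite E by lia.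
  destruct (Nat.eqb_spec d a) as [->|Hda].
  - rewrite app_nth2, repeat_length, Nat.sub_diag by (rewrite repeat_length; lia). reflexivity.
  - rewrite app_nth1 by (rewrite repeat_length; lia). apply nth_repeat_lt. lia.
Qed.

Lemma half_position x : (1 <= x)%nat -> w x = /2 ->
  x = 2%nat \/ exists j i, (s (2*j+4) < x <= s (2*j+5))%nat /\
                          x = (1 + s (2*j+4) + i * (s (2*j+4) + 1))%nat.
Proof.
  intros Hx Hw. destruct (locate x Hx) as [n [Hn [H1 H2]]].
  destruct (Nat.lt_ge_cases n 4) as [Hlt|Hge].
  - destruct n as [|[|[|[|]]]]; try lia.
    + rewrite s_2 in H2. simpl in H1. replace x with 1%nat in Hw by lia. rewrite w_1 in Hw. lra.
    + left. simpl in H1. rewrite s_2 in H1. rewrite s_3 in H2. lia.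
  - destruct (Nat.Even_or_Odd (n - 4)) as [[j Hj]|[j Hj]].
    + replace n with (2*j+4)%nat in * by lia. replace (2*j+4-1)%nat with (2*j+3)%nat in H1 by lia.
      rewrite s_even in H2. rewrite <- (Nat.sub_add (1 + s (2*j+3)) x) in Hw by lia.
      rewrite Nat.add_comm, w_even in Hw by lia. lra.
    + replace n with (2*j+5)%nat in * by lia. replace (2*j+5-1)%nat with (2*j+4)%nat in H1 by lia.
      right. exists j. pose proof (s_odd j) as So. set (a := s (2*j+4)) in *.
      destruct (Nat.eq_dec x (1 + a)) as [E|E]; [exists 0%nat; lia|].
      set (q := (x - 2 - a)%nat).
      pose proof (Nat.div_mod q (a + 1) ltac:(lia)) as Dq.
      pose proof (Nat.mod_upper_bound q (a + 1) ltac:(lia)) as Mq.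
      set (c := (q / (a + 1))%nat) in *. set (d := (q mod (a + 1))%nat) in *.
      assert (Hc : (c < s (2*j+3) - 1)%nat) by nia.
      assert (Ex : x = (2 + a + c * (a + 1) + d)%nat) by lia.
      rewrite Ex in Hw. unfold a in Hw. rewrite w_odd in Hw by lia. fold a in Hw.
      destruct (Nat.eqb_spec d a) as [Hd|Hd]; [|lra].
      exists (S c). split; lia.
Qed.

(** ** Products of consecutive weights *)

Lemma M_S i j : M i (S j) = M i j * w (i + j).
Proof.
  revert i. induction j as [|j IH]; intros i; [simpl; rewrite Nat.add_0_r; ring|].
  change (M i (S (S j))) with (w i * M (S i) (S j)). rewrite IH.
  replace (S i + j)%nat with (i + S j)%nat by lia. simpl. ring.
Qed.

Lemma M_add i j1 j2 : M i (j1 + j2) = M i j1 * M (i + j1) j2.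
Proof.
  induction j2 as [|j2 IH]; [rewrite Nat.add_0_r; simpl; ring|].
  rewrite Nat.add_succ_r, !M_S, IH, Nat.add_assoc. ring.
Qed.

Lemma M_pos i j : 0 < M i j.
Proof.
  revert i. induction j as [|j IH]; intros i; simpl; [lra|].
  pose proof (w_bounds i). pose proof (IH (S i)). nra.
Qed.

Lemma M_const i d c : (forall t, (t < d)%nat -> w (i + t) = c) -> M i d = c ^ d.
Proof.
  induction d as [|d IH]; intros H; [reflexivity|].
  rewrite M_S, IH, H; [simpl; ring|lia|]. intros t Ht. apply H. lia.
Qed.

Section PrefixProducts.
Variable j : nat.
Let a := s (2*j+4).
Let r := (s (2*j+3) - 1)%nat.
Hypothesis prefix_one : M 1 (s (2*j+3)) = 1.

Lemma prefix_even t : (t <= s (2*j+3))%nat -> M 1 (s (2*j+3) + t) = 2 ^ t.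
Proof.
  intros Ht. rewrite M_add, prefix_one, Rmult_1_l. apply M_const.
  intros u Hu. apply w_even. lia.
Qed.

Lemma prefix_even_end : M 1 a = 2 ^ s (2*j+3).
Proof. unfold a. rewrite s_even, <- prefix_even by lia. f_equal. lia. Qed.

Lemma period_ones c t : (c < r)%nat -> (t < a)%nat -> w (1 + (a + 1 + c * (a + 1)) + t) = 1.
Proof.
  intros Hc Ht. replace (1 + (a + 1 + c * (a + 1)) + t)%nat with (2 + a + c * (a + 1) + t)%nat by lia.
  unfold a. rewrite w_odd by (unfold r in Hc; unfold a in Ht; lia).
  destruct (Nat.eqb_spec t (s (2*j+4))); [unfold a in Ht; lia|reflexivity].
Qed.

Lemma period_end c : (c < r)%nat -> w (1 + (a + 1 + c * (a + 1)) + a) = /2.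
Proof.
  intros Hc. replace (1 + (a + 1 + c * (a + 1)) + a)%nat with (2 + a + c * (a + 1) + a)%nat by lia.
  unfold a. rewrite w_odd, Nat.eqb_refl by (unfold r in Hc; lia). reflexivity.
Qed.

Lemma prefix_period c : (c <= r)%nat -> M 1 (a + 1 + c * (a + 1)) = 2 ^ s (2*j+3) * (/2) ^ S c.
Proof.
  induction c as [|c IH]; intros Hc.
  - replace (a + 1 + 0 * (a + 1))%nat with (S a) by lia.
    rewrite M_S, prefix_even_end, (w_odd_start j : w (1 + a) = /2). simpl. ring.
  - replace (a + 1 + S c * (a + 1))%nat with ((a + 1 + c * (a + 1)) + S a)%nat by lia.
    rewrite M_add, IH, M_S, period_end, (M_const _ _ 1) by first [lia | intros; apply period_ones; lia].
    rewrite pow1. simpl. ring.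
Qed.

Lemma prefix_odd c d : (d <= a)%nat -> (c * (a + 1) + d <= r * (a + 1))%nat ->
  M 1 (a + 1 + c * (a + 1) + d) = 2 ^ s (2*j+3) * (/2) ^ S c.
Proof.
  intros Hd Hcd. destruct d as [|d].
  - rewrite Nat.add_0_r. apply prefix_period. nia.
  - assert (Hc : (c < r)%nat) by nia.
    rewrite M_add, prefix_period, (M_const _ _ 1), pow1 by first [lia | intros; apply period_ones; lia].
    ring.
Qed.

Lemma prefix_odd_end : M 1 (s (2*j+5)) = 1.
Proof.
  pose proof (s_odd_lower j). rewrite s_odd. fold a r. rewrite prefix_period by lia.
  replace (S r) with (s (2*j+3)) by (unfold r; lia).
  rewrite <- Rpow_mult_distr, Rinv_r, pow1 by lra. reflexivity.
Qed.

End PrefixProducts.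

Lemma prefix_at_odd j : M 1 (s (2*j+3)) = 1.
Proof.
  induction j as [|j IH].
  - change (2*0+3)%nat with 3%nat. rewrite s_3. simpl. rewrite w_1, w_2. field.
  - replace (2 * S j + 3)%nat with (2*j+5)%nat by lia. exact (prefix_odd_end j IH).
Qed.

Lemma prefix_upper_block j m : (s (2*j+3) <= m <= s (2*j+5))%nat -> M 1 m <= 2 ^ s (2*j+3).
Proof.
  intros Hm. pose proof (prefix_at_odd j) as H0.
  pose proof (s_odd j) as So. pose proof (s_even j) as Se.
  destruct (Nat.le_gt_cases m (s (2*j+4))) as [Hle|Hgt].
  - replace m with (s (2*j+3) + (m - s (2*j+3)))%nat by lia.
    rewrite prefix_even by (assumption || lia). apply Rle_pow; [lra|lia].
  - set (a := s (2*j+4)) in *. set (q := (m - a - 1)%nat).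
    pose proof (Nat.div_mod q (a + 1) ltac:(lia)) as Dq.
    pose proof (Nat.mod_upper_bound q (a + 1) ltac:(lia)) as Mq.
    set (c := (q / (a + 1))%nat) in *. set (d := (q mod (a + 1))%nat) in *.
    replace m with (a + 1 + c * (a + 1) + d)%nat by lia.
    unfold a. rewrite prefix_odd by (assumption || fold a; lia).
    assert (Hh : (/2) ^ S c <= 1) by (rewrite <- (pow1 (S c)); apply pow_incr; lra).
    pose proof (pow_le 2 (s (2*j+3)) ltac:(lra)). nra.
Qed.

Lemma prefix_upper j m : (m <= s (2*j+5))%nat -> M 1 m <= 2 ^ s (2*j+3).
Proof.
  revert m. induction j as [|j IH]; intros m Hm.
  - change (2*0+3)%nat with 3%nat in *. rewrite s_3.
    destruct (Nat.le_gt_cases m 2) as [Hle|Hgt].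
    + destruct m as [|[|[|]]]; try lia; simpl; rewrite ?w_1, ?w_2; lra.
    + apply (prefix_upper_block 0). change (2*0+3)%nat with 3%nat. rewrite s_3. lia.
  - replace (2 * S j + 3)%nat with (2*j+5)%nat by lia.
    destruct (Nat.le_gt_cases m (s (2*j+5))) as [Hle|Hgt].
    + apply Rle_trans with (2 ^ s (2*j+3)); [exact (IH m Hle)|].
      apply Rle_pow; [lra|]. apply s_le. lia.
    + replace (2*j+5)%nat with (2 * S j + 3)%nat by lia. apply prefix_upper_block.
      replace (2 * S j + 5)%nat with (2*j+7)%nat in Hm by lia.
      replace (2 * S j + 3)%nat with (2*j+5)%nat by lia.
      replace (2 * S j + 5)%nat with (2*j+7)%nat by lia. lia.
Qed.

Lemma prefix_lower j t : (t <= s (2*j+3) - 1)%nat ->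
  M 1 (s (2*j+4) + t) >= 2 ^ (s (2*j+3) - 1).
Proof.
  intros Ht. pose proof (prefix_at_odd j) as H0. pose proof (s_odd_lower j).
  apply Rle_ge. destruct t as [|t].
  - rewrite Nat.add_0_r, (prefix_even_end j H0). apply Rle_pow; [lra|lia].
  - replace (s (2*j+4) + S t)%nat with (s (2*j+4) + 1 + 0 * (s (2*j+4) + 1) + t)%nat by lia.
    rewrite (prefix_odd j H0 0 t) by (rewrite s_even; nia).
    set (e := (s (2*j+3) - 1)%nat). replace (s (2*j+3)) with (S e) by (unfold e; lia). simpl. lra.
Qed.

(** The product over [[1, i + n_k)] is large (prefix_lower)
    while the one over [[1, i)] is moderate (prefix_upper). *)
Lemma window_large k i : (2 <= k)%nat -> (1 <= i <= s (2*k+1))%nat -> M i (nk k) >= 2 ^ k.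
Proof.
  intros Hk Hi. set (J := (k - 1)%nat). set (j := (k - 2)%nat).
  assert (ES : s (2*k+1) = s (2*J+3)) by (f_equal; unfold J; lia).
  assert (Enk : nk k = s (2*J+4)) by (unfold nk; f_equal; unfold J; lia).
  pose proof (M_add 1 (i-1) (nk k)) as Hsplit. replace (1 + (i-1))%nat with i in Hsplit by lia.
  assert (Hup : M 1 (i-1) <= 2 ^ s (2*j+3)).
  { apply prefix_upper. replace (2*j+5)%nat with (2*k+1)%nat by (unfold j; lia). lia. }
  assert (Hlow : M 1 (i - 1 + nk k) >= 2 ^ (s (2*J+3) - 1)).
  { rewrite Enk, Nat.add_comm. apply prefix_lower. lia. }
  assert (Hgap : (s (2*J+3) - 1 = s (2*j+3) + k + (s (2*J+3) - 1 - s (2*j+3) - k))%nat).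
  { replace (2*J+3)%nat with (2*j+5)%nat by (unfold J, j; lia). rewrite s_odd, s_even.
    pose proof (s_odd_lower j). unfold j in *. nia. }
  rewrite Hgap, !pow_add, Hsplit in Hlow.
  pose proof (M_pos 1 (i-1)). pose proof (M_pos i (nk k)).
  pose proof (pow_lt 2 (s (2*j+3)) ltac:(lra)). pose proof (pow_lt 2 k ltac:(lra)).
  assert (1 <= 2 ^ (s (2*J+3) - 1 - s (2*j+3) - k)) by (apply pow_R1_Rle; lra).
  apply Rle_ge, (Rmult_le_reg_l (M 1 (i-1))); [assumption|].
  apply Rle_trans with (2 ^ s (2*j+3) * 2 ^ k); [apply Rmult_le_compat_r; lra|].
  apply Rle_trans with (2 ^ s (2*j+3) * 2 ^ k * 2 ^ (s (2*J+3) - 1 - s (2*j+3) - k)); [|lra].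
  rewrite <- (Rmult_1_r (2 ^ s (2*j+3) * 2 ^ k)) at 1. apply Rmult_le_compat_l; nra.
Qed.

(** Beyond [s_(2k+1)], two distinct weights [1/2] are more than [n_k = s_(2k+2)] apart:
    the periods of [b_(2j+5)] have length [s_(2j+4) + 1], and consecutive odd blocks are
    separated by the even block [b_(2j+6)] of length [s_(2j+5)]. *)
Lemma half_separation k x y : (1 <= k)%nat -> (s (2*k+1) < x)%nat -> (x < y)%nat ->
  w x = /2 -> w y = /2 -> (s (2*k+2) < y - x)%nat.
Proof.
  intros Hk Hx Hxy Wx Wy.
  pose proof (s_le 3 (2*k+1) ltac:(lia)) as S3. rewrite s_3 in S3.
  destruct (half_position x ltac:(lia) Wx) as [E|[j [i [Hb Hxe]]]]; [lia|].
  destruct (half_position y ltac:(lia) Wy) as [E|[j' [i' [Hb' Hye]]]]; [lia|].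
  assert (Hj : (k <= j + 1)%nat).
  { destruct (Nat.le_gt_cases (2*j+5) (2*k+1)) as [Hle|]; [|lia].
    pose proof (s_le _ _ Hle). lia. }
  assert (Ha : (s (2*k+2) <= s (2*j+4))%nat) by (apply s_le; lia).
  destruct (Nat.lt_trichotomy j j') as [Hjj|[<-|Hjj]].
  - pose proof (s_le (2*j+6) (2*j'+4) ltac:(lia)).
    pose proof (s_even (j+1)) as E.
    replace (2*(j+1)+4)%nat with (2*j+6)%nat in E by lia.
    replace (2*(j+1)+3)%nat with (2*j+5)%nat in E by lia.
    pose proof (s_le (2*j+4) (2*j+5) ltac:(lia)). lia.
  - assert (i < i')%nat by nia. nia.
  - pose proof (s_le (2*j'+5) (2*j+3) ltac:(lia)).
    pose proof (s_le (2*j+3) (2*j+4) ltac:(lia)). lia.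
Qed.

Lemma window_beyond k i j : (1 <= k)%nat -> (s (2*k+1) < i)%nat -> (j <= nk k)%nat ->
  (M i j >= 1 /\ forall x, (i <= x < i + j)%nat -> w x <> /2) \/
  (M i j >= /2 /\ exists x, (i <= x < i + j)%nat /\ w x = /2).
Proof.
  intros Hk Hi. induction j as [|j IH]; intros Hj.
  - left. split; [simpl; lra|intros; lia].
  - rewrite M_S. pose proof (M_pos i j).
    destruct (IH ltac:(lia)) as [[H1 H2]|[H1 [x [Hx Wx]]]];
      destruct (w_value (i + j)) as [W|[W|W]]; rewrite W.
    1,2: left; split; [nra|]; intros x Hx;
         destruct (Nat.eq_dec x (i + j)) as [->|]; [rewrite W; lra|apply H2; lia].
    1-3: right; split; [nra|].
    + exists (i + j)%nat. split; [lia|exact W].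
    + exists x. split; [lia|exact Wx].
    + exists x. split; [lia|exact Wx].
    + exfalso. pose proof (half_separation k x (i + j) Hk ltac:(lia) ltac:(lia) Wx W).
      unfold nk in Hj. lia.
Qed.

Lemma window_beyond_half k i : (1 <= k)%nat -> (s (2*k+1) < i)%nat -> M i (nk k) >= /2.
Proof.
  intros Hk Hi. destruct (window_beyond k i (nk k) Hk Hi (le_n _)) as [[H _]|[H _]]; lra.
Qed.

(** ** Iterates of the shifts *)

Lemma iter_Fw n x m :
  Nat.iter n Fw x m = if (m <? n)%nat then 0 else x (m - n)%nat / M (m - n + 1) n.
Proof.
  revert m. induction n as [|n IH]; intros m; [simpl; rewrite Nat.sub_0_r; field|].
  change (Nat.iter (S n) Fw x) with (Fw (Nat.iter n Fw x)).
  destruct m as [|m]; [reflexivity|]. unfold Fw at 1. rewrite IH.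
  change (S m <? S n)%nat with (m <? n)%nat.
  destruct (Nat.ltb_spec m n); [unfold Rdiv; ring|].
  replace (S m - S n)%nat with (m - n)%nat by lia.
  rewrite M_S. replace (m - n + 1 + n)%nat with (S m) by lia.
  pose proof (M_pos (m - n + 1) n). pose proof (w_bounds (S m)). field. lra.
Qed.

Lemma iter_Bw n x m : Nat.iter n Bw x m = M (S m) n * x (m + n)%nat.
Proof.
  revert m. induction n as [|n IH]; intros m; [simpl; rewrite Nat.add_0_r; ring|].
  change (Nat.iter (S n) Bw x) with (Bw (Nat.iter n Bw x)).
  unfold Bw at 1. rewrite IH. simpl M. replace (S m + n)%nat with (m + S n)%nat by lia. ring.
Qed.

Lemma Bw_Fw y : Bw (Fw y) = y.
Proof.
  apply functional_extensionality. intros n. unfold Bw, Fw.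
  pose proof (w_bounds (S n)). field. lra.
Qed.

Lemma window_ge_half k i : (2 <= k)%nat -> (1 <= i)%nat -> M i (nk k) >= /2.
Proof.
  intros Hk Hi. destruct (Nat.le_gt_cases i (s (2*k+1))).
  - pose proof (window_large k i Hk ltac:(lia)). pose proof (pow_R1_Rle 2 k ltac:(lra)). lra.
  - apply window_beyond_half; lia.
Qed.

Lemma Rabs_div_le x m c : 0 < c -> c <= m -> Rabs (x / m) <= / c * Rabs x.
Proof.
  intros Hc Hm. unfold Rdiv. rewrite Rabs_mult, Rabs_inv, (Rabs_pos_eq m) by lra.
  rewrite Rmult_comm. apply Rmult_le_compat_r; [apply Rabs_pos|]. apply Rinv_le_contravar; lra.
Qed.

Lemma div_window_bound k j x : (2 <= k)%nat ->
  Rabs (x / M (S j) (nk k)) <= 2 * Rabs x /\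
  ((j < s (2*k+1))%nat -> Rabs (x / M (S j) (nk k)) <= / 2 ^ k * Rabs x).
Proof.
  intros Hk. split.
  - rewrite <- (Rinv_inv 2). apply Rabs_div_le; [lra|]. apply Rge_le, window_ge_half; lia.
  - intros Hj. apply Rabs_div_le; [apply pow_lt; lra|]. apply Rge_le, window_large; lia.
Qed.

Lemma nk_ge k : (1 <= k)%nat -> (k + 1 <= s (2*k+1))%nat /\ (s (2*k+1) <= nk k)%nat.
Proof.
  intros Hk. split.
  - pose proof (s_odd_lower (k - 1)) as H. replace (2*(k-1)+3)%nat with (2*k+1)%nat in H by lia. lia.
  - apply s_le. lia.
Qed.

Lemma pow2_eventually_large A : exists K, forall k, (K <= k)%nat -> A < 2 ^ k.
Proof.
  destruct (Pow_x_infinity 2 ltac:(rewrite Rabs_pos_eq; lra) (A + 1)) as [K HK].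
  exists K. intros k Hk. specialize (HK k Hk). rewrite Rabs_pos_eq in HK by (apply pow_le; lra).
  lra.
Qed.

(** ** The correction used for strong transitivity *)

Definition truncate (N : nat) (u : nat -> R) : nat -> R :=
  fun m => if (m <? N)%nat then 0 else u m.

Definition correction (u y : nat -> R) (k : nat) : nat -> R :=
  seq_sub (Nat.iter (nk k) Fw y) (truncate (nk k) u).

Lemma iter_Bw_correction u y k :
  Nat.iter (nk k) Bw (fun m => u m + correction u y k m) = y.
Proof.
  apply functional_extensionality. intros m.
  rewrite iter_Bw. unfold correction, seq_sub, truncate. rewrite iter_Fw.
  destruct (Nat.ltb_spec (m + nk k) (nk k)); [lia|].
  replace (m + nk k - nk k)%nat with m by lia. replace (m + 1)%nat with (S m) by lia.
  pose proof (M_pos (S m) (nk k)). field. lra.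
Qed.

Lemma rpow_nonneg a p : 0 <= rpow a p.
Proof. unfold rpow. destruct (Rle_dec a 0); [lra|]. left. apply exp_pos. Qed.

Lemma rpow_zero p : rpow (Rabs 0) p = 0.
Proof. unfold rpow. rewrite Rabs_R0. destruct (Rle_dec 0 0); lra. Qed.

Lemma rpow_le_mono a b p : 0 <= p -> 0 <= a <= b -> rpow a p <= rpow b p.
Proof.
  intros Hp Hab. unfold rpow.
  destruct (Rle_dec a 0), (Rle_dec b 0); try lra; [left; apply exp_pos|].
  apply Rle_Rpower_l; lra.
Qed.

Lemma rpow_scale c a p : 0 < c -> 0 <= a -> rpow (c * a) p = Rpower c p * rpow a p.
Proof.
  intros Hc Ha. unfold rpow.
  destruct (Rle_dec a 0), (Rle_dec (c * a) 0); try (exfalso; nra); [ring|].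
  symmetry. apply Rpower_mult_distr; lra.
Qed.

Lemma Rpower_2_ge_1 p : 0 <= p -> 1 <= Rpower 2 p.
Proof. intros Hp. rewrite <- (Rpower_O 2) by lra. apply Rle_Rpower; lra. Qed.

Lemma rpow_abs_bound x y c p : 0 <= p -> 0 < c -> Rabs x <= c * Rabs y ->
  rpow (Rabs x) p <= Rpower c p * rpow (Rabs y) p.
Proof.
  intros Hp Hc H. rewrite <- rpow_scale by (auto; apply Rabs_pos).
  apply rpow_le_mono; [lra|]. split; [apply Rabs_pos|lra].
Qed.

Lemma rpow_sum_le x y p : 0 <= p -> 0 <= x -> 0 <= y ->
  rpow (x + y) p <= Rpower 2 p * (rpow x p + rpow y p).
Proof.
  intros Hp Hx Hy. pose proof (rpow_nonneg x p). pose proof (rpow_nonneg y p).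
  pose proof (Rpower_2_ge_1 p Hp).
  destruct (Rle_dec y x).
  - pose proof (rpow_abs_bound (x + y) x 2 p Hp ltac:(lra)) as B.
    rewrite !Rabs_pos_eq in B by lra. specialize (B ltac:(lra)). nra.
  - pose proof (rpow_abs_bound (x + y) y 2 p Hp ltac:(lra)) as B.
    rewrite !Rabs_pos_eq in B by lra. specialize (B ltac:(lra)). nra.
Qed.

Lemma Rpower_le_self t p : 1 <= p -> 0 < t <= 1 -> Rpower t p <= t.
Proof.
  intros Hp Ht. unfold Rpower. rewrite <- (exp_ln t) at 2 by lra.
  assert (Hln : ln t <= 0) by (rewrite <- ln_1; apply ln_le; lra).
  assert (Hle : p * ln t <= ln t) by nra.
  destruct (Rle_lt_or_eq_dec _ _ Hle) as [Hlt|Heq]; [left; apply exp_increasing, Hlt|rewrite Heq; lra].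
Qed.

Lemma rpow_inv_lt S e p : 1 <= p -> 0 < e -> S < Rpower e p -> rpow S (/p) < e.
Proof.
  intros Hp He HS. unfold rpow. destruct (Rle_dec S 0); [lra|].
  apply Rlt_le_trans with (Rpower (Rpower e p) (/p)).
  - apply Rlt_Rpower_l; [apply Rinv_0_lt_compat; lra|lra].
  - rewrite Rpower_mult, Rinv_r, Rpower_1 by lra. lra.
Qed.

Lemma rpow_inv_ge x S p : 1 <= p -> rpow x p <= S -> 0 <= x -> x <= rpow S (/p).
Proof.
  intros Hp H Hx. unfold rpow in *.
  destruct (Rle_dec x 0), (Rle_dec S 0); try lra.
  - pose proof (exp_pos (/p * ln S)). unfold Rpower. lra.
  - pose proof (exp_pos (p * ln x)). unfold Rpower in H. lra.
  - apply Rle_trans with (Rpower (Rpower x p) (/p)).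
    + rewrite Rpower_mult, Rinv_r, Rpower_1 by lra. lra.
    + apply Rle_Rpower_l; [left; apply Rinv_0_lt_compat; lra|]. split; [apply exp_pos|lra].
Qed.

(** Coquelicot's [ex_series_scal_l] and [ex_series_plus], stated on [R] for [apply]. *)
Lemma ex_series_Rscal c a : ex_series a -> ex_series (fun n => c * a n).
Proof. exact (ex_series_scal_l c a). Qed.

Lemma ex_series_Rplus a b : ex_series a -> ex_series b -> ex_series (fun n => a n + b n).
Proof. exact (ex_series_plus a b). Qed.

Lemma ex_series_nonneg_le a b : (forall n, 0 <= a n <= b n) -> ex_series b -> ex_series a.
Proof.
  intros H Hb. apply (ex_series_le a b); [|exact Hb].
  intros n. change (norm (a n)) with (Rabs (a n)). rewrite Rabs_pos_eq; apply H.
Qed.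

Lemma Series_nonneg a : (forall n, 0 <= a n) -> ex_series a -> 0 <= Series a.
Proof.
  intros H Ha. replace 0 with (Series (fun _ => 0 * a 0%nat)).
  - apply Series_le; [|exact Ha]. intros n. rewrite Rmult_0_l. split; [lra|apply H].
  - rewrite Series_scal_l. ring.
Qed.

Lemma term_le_Series a n : (forall n, 0 <= a n) -> ex_series a -> a n <= Series a.
Proof.
  intros H Ha. rewrite (Series_incr_n a (S n)) by (lia || exact Ha). simpl pred.
  assert (a n <= sum_f_R0 a n).
  { destruct n; simpl; [lra|]. pose proof (cond_pos_sum a n H). lra. }
  assert (0 <= Series (fun k => a (S n + k)%nat)).
  { apply Series_nonneg; [intros; apply H|]. apply (ex_series_incr_n a (S n)). exact Ha. }
  lra.
Qed.

Lemma ex_series_truncate N a : ex_series a -> ex_series (truncate N a).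
Proof.
  intros Ha. apply (ex_series_incr_n _ N), (ex_series_ext (fun k => a (N + k)%nat)).
  - intros k. unfold truncate. destruct (Nat.ltb_spec (N + k) N); [lia|reflexivity].
  - apply (ex_series_incr_n a N). exact Ha.
Qed.

Lemma Series_truncate_small a : ex_series a -> forall d, 0 < d ->
  exists N0, forall N, (N0 <= N)%nat -> Series (truncate N a) < d.
Proof.
  intros Ha d Hd.
  assert (C : is_lim_seq (sum_n a) (Series a)) by exact (Series_correct a Ha).
  apply is_lim_seq_spec in C. destruct (C (mkposreal d Hd)) as [N1 HN1].
  exists (S N1). intros N HN.
  rewrite (Series_incr_n_aux (truncate N a) N)
    by (intros k Hk; unfold truncate; destruct (Nat.ltb_spec k N); [reflexivity|lia]).
  rewrite (Series_ext _ (fun k => a (N + k)%nat))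
    by (intros k; unfold truncate; destruct (Nat.ltb_spec (N + k) N); [lia|reflexivity]).
  specialize (HN1 (pred N) ltac:(lia)). simpl in HN1.
  rewrite (Series_incr_n a N), sum_n_Reals in HN1 by (lia || exact Ha).
  apply Rabs_lt_between in HN1. lra.
Qed.

Lemma c0_eventually z : is_lim_seq z 0 ->
  forall d, 0 < d -> exists N, forall n, (N <= n)%nat -> Rabs (z n) < d.
Proof.
  intros H d Hd. apply is_lim_seq_spec in H. destruct (H (mkposreal d Hd)) as [N HN].
  exists N. intros n Hn. specialize (HN n Hn). simpl in HN. rewrite Rminus_0_r in HN. exact HN.
Qed.

Lemma c0_bounded z : is_lim_seq z 0 -> exists B, 0 <= B /\ forall n, Rabs (z n) <= B.
Proof.
  intros H. destruct (c0_eventually z H 1 ltac:(lra)) as [N HN].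
  assert (Hfin : forall N, exists B, 0 <= B /\ forall n, (n < N)%nat -> Rabs (z n) <= B).
  { induction N0 as [|N0 [B [HB HB']]]; [exists 0; split; [lra|intros; lia]|].
    exists (Rmax B (Rabs (z N0))). split; [apply Rle_trans with B; [lra|apply Rmax_l]|].
    intros n Hn. destruct (Nat.eq_dec n N0) as [->|]; [apply Rmax_r|].
    apply Rle_trans with B; [apply HB'; lia|apply Rmax_l]. }
  destruct (Hfin N) as [B [HB HB']]. exists (Rmax B 1).
  split; [apply Rle_trans with B; [lra|apply Rmax_l]|]. intros n.
  destruct (Nat.le_gt_cases N n).
  - apply Rle_trans with 1; [left; apply HN; lia|apply Rmax_r].
  - apply Rle_trans with B; [apply HB'; lia|apply Rmax_l].
Qed.

Lemma Sup_seq_le_const z c : (forall n, Rabs (z n) <= c) ->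
  Rbar_le (Sup_seq (fun n => Rabs (z n))) c.
Proof.
  intros H. replace (Finite c) with (Sup_seq (fun _ => Finite c)).
  - apply Sup_seq_le. intros n. apply H.
  - apply is_sup_seq_unique. intros eps. split.
    + intros n. simpl. destruct eps. simpl. lra.
    + exists 0%nat. destruct eps. simpl. lra.
Qed.

Lemma c0_norm_le z c : 0 <= c -> (forall n, Rabs (z n) <= c) -> normX C0 z <= c.
Proof.
  intros Hc H. simpl. pose proof (Sup_seq_le_const z c H).
  destruct (Sup_seq (fun n => Rabs (z n))); simpl in *; lra.
Qed.

Lemma c0_coord_le z n : is_lim_seq z 0 -> Rabs (z n) <= normX C0 z.
Proof.
  intros H. destruct (c0_bounded z H) as [B [HB HB']]. simpl.
  pose proof (Sup_seq_minor_le (fun n => Finite (Rabs (z n))) (Rabs (z n)) n ltac:(simpl; lra)).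
  pose proof (Sup_seq_le_const z B HB').
  destruct (Sup_seq (fun n => Rabs (z n))); simpl in *; lra.
Qed.

Lemma coord_le_normX X z n : valid_space X -> inX X z -> Rabs (z n) <= normX X z.
Proof.
  destruct X as [|p]; simpl; intros Hv Hz; [exact (c0_coord_le z n Hz)|].
  apply rpow_inv_ge; [exact Hv| |apply Rabs_pos].
  apply (term_le_Series (fun n => rpow (Rabs (z n)) p)); [intros; apply rpow_nonneg|exact Hz].
Qed.

Lemma normX_nonneg X z : valid_space X -> inX X z -> 0 <= normX X z.
Proof.
  intros Hv Hz. apply Rle_trans with (Rabs (z 0%nat)); [apply Rabs_pos|].
  apply coord_le_normX; assumption.
Qed.

Lemma inX_dominated X z a b : valid_space X -> inX X a -> inX X b ->
  (forall m, Rabs (z m) <= Rabs (a m) + Rabs (b m)) -> inX X z.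
Proof.
  destruct X as [|p]; simpl; intros Hv Ha Hb H.
  - apply is_lim_seq_abs_0.
    apply (is_lim_seq_le_le (fun _ => 0) _ (fun m => Rabs (a m) + Rabs (b m))).
    + intros m. split; [apply Rabs_pos|apply H].
    + apply is_lim_seq_const.
    + replace (Finite 0) with (Finite (0 + 0)) by (f_equal; ring).
      apply is_lim_seq_plus'; [apply (is_lim_seq_abs_0 a)|apply (is_lim_seq_abs_0 b)]; assumption.
  - apply (ex_series_nonneg_le _
      (fun m => Rpower 2 p * (rpow (Rabs (a m)) p + rpow (Rabs (b m)) p))).
    + intros m. split; [apply rpow_nonneg|].
      eapply Rle_trans; [apply rpow_le_mono; [lra|split; [apply Rabs_pos|apply H]]|].
      apply rpow_sum_le; [lra|apply Rabs_pos|apply Rabs_pos].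
    + apply ex_series_Rscal, ex_series_Rplus; assumption.
Qed.

Lemma inX_of_tail X z : inX X (fun m => z (S m)) -> inX X z.
Proof.
  destruct X as [|p]; simpl; intros H.
  - apply is_lim_seq_incr_1. exact H.
  - apply ex_series_incr_1. exact H.
Qed.

Lemma inX_zero X : inX X zero_seq.
Proof.
  destruct X as [|p]; simpl; [apply is_lim_seq_const|].
  apply (ex_series_ext (fun n => 0 * 0 ^ n)).
  - intros n. unfold zero_seq. rewrite rpow_zero. apply Rmult_0_l.
  - apply ex_series_Rscal, ex_series_geom. rewrite Rabs_R0. lra.
Qed.

Lemma Rabs_sub_le x y : Rabs (x - y) <= Rabs x + Rabs y.
Proof. rewrite <- (Rabs_Ropp y). apply Rabs_triang. Qed.

Lemma inX_add X a b : valid_space X -> inX X a -> inX X b -> inX X (fun m => a m + b m).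
Proof. intros Hv Ha Hb. apply (inX_dominated X _ a b Hv Ha Hb). intros m. apply Rabs_triang. Qed.

Lemma inX_sub X a b : valid_space X -> inX X a -> inX X b -> inX X (seq_sub a b).
Proof.
  intros Hv Ha Hb. apply (inX_dominated X _ a b Hv Ha Hb). intros m. apply Rabs_sub_le.
Qed.

(** [X] is invariant under [F_w], since the weights are at least [1/2]. *)
Lemma inX_Fw X y : valid_space X -> inX X y -> inX X (Fw y).
Proof.
  intros Hv Hy. apply inX_of_tail, (inX_dominated X _ y y Hv Hy Hy). intros m. cbn [Fw].
  pose proof (Rabs_div_le (y m) (w (S m)) (/2) ltac:(lra) ltac:(apply w_bounds)).
  rewrite Rinv_inv in H. lra.
Qed.

Lemma inX_iter_Fw X n y : valid_space X -> inX X y -> inX X (Nat.iter n Fw y).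
Proof. intros Hv Hy. induction n as [|n IH]; [exact Hy|]. apply inX_Fw; assumption. Qed.

Lemma inX_truncate X N u : valid_space X -> inX X u -> inX X (truncate N u).
Proof.
  intros Hv Hu. apply (inX_dominated X _ u u Hv Hu Hu). intros m. unfold truncate.
  pose proof (Rabs_pos (u m)). destruct (m <? N)%nat; rewrite ?Rabs_R0; lra.
Qed.

Lemma inX_correction X u y k : valid_space X -> inX X u -> inX X y -> inX X (correction u y k).
Proof.
  intros Hv Hu Hy. apply inX_sub; [exact Hv|apply inX_iter_Fw|apply inX_truncate]; assumption.
Qed.

Definition lp_sum (p : R) (x : nat -> R) : R := Series (fun m => rpow (Rabs (x m)) p).

Section LpEstimates.
Variable p : R.
Hypothesis Hp : 1 <= p.

Lemma lp_norm_lt x e : 0 < e -> lp_sum p x < Rpower e p -> normX (Lp p) x < e.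
Proof. intros He Hx. exact (rpow_inv_lt _ e p Hp He Hx). Qed.

Lemma lp_sum_sub a b : inX (Lp p) a -> inX (Lp p) b ->
  lp_sum p (seq_sub a b) <= Rpower 2 p * (lp_sum p a + lp_sum p b).
Proof.
  intros Ha Hb. unfold lp_sum. rewrite <- Series_plus, <- Series_scal_l by assumption.
  apply Series_le.
  - intros m. split; [apply rpow_nonneg|].
    eapply Rle_trans; [apply rpow_le_mono; [lra|split; [apply Rabs_pos|apply Rabs_sub_le]]|].
    apply rpow_sum_le; [lra|apply Rabs_pos|apply Rabs_pos].
  - apply ex_series_Rscal, ex_series_Rplus; assumption.
Qed.

Lemma lp_sum_truncate N u :
  lp_sum p (truncate N u) = Series (truncate N (fun m => rpow (Rabs (u m)) p)).
Proof.
  apply Series_ext. intros m. unfold truncate. destruct (m <? N)%nat; [apply rpow_zero|reflexivity].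
Qed.

Lemma lp_sum_iter_Fw y k : (2 <= k)%nat -> inX (Lp p) y ->
  lp_sum p (Nat.iter (nk k) Fw y) <=
  / 2 ^ k * lp_sum p y + Rpower 2 p * Series (truncate (s (2*k+1)) (fun j => rpow (Rabs (y j)) p)).
Proof.
  intros Hk Hy. set (ay := fun j => rpow (Rabs (y j)) p). simpl in Hy. fold ay in Hy.
  unfold lp_sum at 1. rewrite (Series_incr_n_aux _ (nk k)).
  2: { intros m Hm. rewrite iter_Fw. destruct (Nat.ltb_spec m (nk k)); [apply rpow_zero|lia]. }
  unfold lp_sum. fold ay. rewrite <- !Series_scal_l, <- Series_plus.
  2: apply ex_series_Rscal, Hy.
  2: apply ex_series_Rscal, ex_series_truncate, Hy.
  apply Series_le.
  - intros j. split; [apply rpow_nonneg|]. rewrite iter_Fw.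
    destruct (Nat.ltb_spec (nk k + j) (nk k)); [lia|].
    replace (nk k + j - nk k)%nat with j by lia. replace (j + 1)%nat with (S j) by lia.
    destruct (div_window_bound k j (y j) Hk) as [Benl Bshr].
    assert (HD : 0 < / 2 ^ k <= 1).
    { split; [apply Rinv_0_lt_compat, pow_lt; lra|].
      rewrite <- Rinv_1. apply Rinv_le_contravar; [lra|apply pow_R1_Rle; lra]. }
    pose proof (rpow_nonneg (Rabs (y j)) p). pose proof (Rpower_2_ge_1 p ltac:(lra)).
    unfold truncate, ay. destruct (Nat.ltb_spec j (s (2*k+1))) as [Hj|Hj].
    + eapply Rle_trans; [apply (rpow_abs_bound _ (y j) (/ 2 ^ k)); [lra|lra|exact (Bshr Hj)]|].
      pose proof (Rpower_le_self (/ 2 ^ k) p Hp HD). nra.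
    + eapply Rle_trans; [apply (rpow_abs_bound _ (y j) 2); [lra|lra|exact Benl]|]. nra.
  - apply ex_series_Rplus; apply ex_series_Rscal; [exact Hy|apply ex_series_truncate, Hy].
Qed.

(** [F_w^(n_k) y -> 0] in [l^p]: the shrunk part by [2^k], the rest as a tail of [y]. *)
Lemma lp_iter_Fw_small y : inX (Lp p) y -> forall E, 0 < E ->
  exists K, forall k, (K <= k)%nat -> lp_sum p (Nat.iter (nk k) Fw y) < E.
Proof.
  intros Hy E HE. set (C := Rpower 2 p). assert (HC : 1 <= C) by (apply Rpower_2_ge_1; lra).
  assert (HS : 0 <= lp_sum p y) by (apply Series_nonneg; [intros; apply rpow_nonneg|exact Hy]).
  destruct (pow2_eventually_large (2 * lp_sum p y / E)) as [K1 HK1].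
  destruct (Series_truncate_small _ Hy (E / (2 * C)) ltac:(apply Rdiv_lt_0_compat; lra))
    as [N0 HN0].
  exists (Nat.max 2 (Nat.max K1 N0)). intros k Hk.
  destruct (nk_ge k ltac:(lia)) as [Hs _].
  pose proof (HK1 k ltac:(lia)) as Hpow. pose proof (HN0 (s (2*k+1)) ltac:(lia)) as Htail.
  eapply Rle_lt_trans; [apply lp_sum_iter_Fw; [lia|exact Hy]|]. fold C.
  assert (Hhead : / 2 ^ k * lp_sum p y < E / 2).
  { pose proof (pow_lt 2 k ltac:(lra)).
    apply (Rmult_lt_reg_l (2 ^ k)); [lra|]. rewrite <- Rmult_assoc, Rinv_r, Rmult_1_l by lra.
    apply (Rmult_lt_reg_r (2 / E)); [apply Rdiv_lt_0_compat; lra|].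
    replace (lp_sum p y * (2 / E)) with (2 * lp_sum p y / E) by (field; lra).
    replace (2 ^ k * (E / 2) * (2 / E)) with (2 ^ k) by (field; lra). exact Hpow. }
  assert (Htail' : C * Series (truncate (s (2*k+1)) (fun j => rpow (Rabs (y j)) p)) < E / 2).
  { replace (E / 2) with (C * (E / (2 * C))) by (field; lra). apply Rmult_lt_compat_l; lra. }
  lra.
Qed.

Lemma lp_truncate_small u : inX (Lp p) u -> forall E, 0 < E ->
  exists K, forall k, (K <= k)%nat -> lp_sum p (truncate (nk k) u) < E.
Proof.
  intros Hu E HE. destruct (Series_truncate_small _ Hu E HE) as [N0 HN0].
  exists (Nat.max 1 N0). intros k Hk. destruct (nk_ge k ltac:(lia)).
  rewrite lp_sum_truncate. apply HN0. lia.
Qed.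

Lemma lp_correction_small u y : inX (Lp p) u -> inX (Lp p) y -> forall e, 0 < e ->
  exists K, forall k, (K <= k)%nat -> normX (Lp p) (correction u y k) < e.
Proof.
  intros Hu Hy e He. set (E := Rpower e p). assert (HE : 0 < E) by apply exp_pos.
  set (C := Rpower 2 p). assert (HC : 1 <= C) by (apply Rpower_2_ge_1; lra).
  destruct (lp_iter_Fw_small y Hy (E / (2 * C)) ltac:(apply Rdiv_lt_0_compat; lra)) as [K1 HK1].
  destruct (lp_truncate_small u Hu (E / (2 * C)) ltac:(apply Rdiv_lt_0_compat; lra)) as [K2 HK2].
  exists (Nat.max K1 K2). intros k Hk. apply lp_norm_lt; [exact He|]. fold E.
  specialize (HK1 k ltac:(lia)). specialize (HK2 k ltac:(lia)).
  eapply Rle_lt_trans; [apply lp_sum_sub; [apply inX_iter_Fw|apply inX_truncate]; easy|].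
  fold C. replace E with (C * (E / (2 * C) + E / (2 * C))) by (field; lra).
  apply Rmult_lt_compat_l; lra.
Qed.
End LpEstimates.

Lemma c0_norm_sub a b : inX C0 a -> inX C0 b ->
  normX C0 (seq_sub a b) <= normX C0 a + normX C0 b.
Proof.
  intros Ha Hb. pose proof (c0_coord_le a 0 Ha). pose proof (Rabs_pos (a 0%nat)).
  pose proof (c0_coord_le b 0 Hb). pose proof (Rabs_pos (b 0%nat)).
  apply c0_norm_le; [lra|]. intros m. eapply Rle_trans; [apply Rabs_sub_le|].
  pose proof (c0_coord_le a m Ha). pose proof (c0_coord_le b m Hb). lra.
Qed.

(** [F_w^(n_k) y -> 0] in [c_0]: the shrunk coordinates are at most [2 sup|y| / 2^k], the
    others at most twice a late coordinate of [y]. *)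
Lemma c0_iter_Fw_small y : inX C0 y -> forall e, 0 < e ->
  exists K, forall k, (K <= k)%nat -> normX C0 (Nat.iter (nk k) Fw y) < e.
Proof.
  intros Hy e He. simpl in Hy.
  destruct (c0_bounded y Hy) as [B [HB HB']].
  destruct (c0_eventually y Hy (e / 4) ltac:(lra)) as [Ny HNy].
  destruct (pow2_eventually_large (2 * B / e)) as [K1 HK1].
  exists (Nat.max 2 (Nat.max K1 Ny)). intros k Hk.
  destruct (nk_ge k ltac:(lia)) as [Hs _].
  pose proof (HK1 k ltac:(lia)) as Hpow. pose proof (pow_lt 2 k ltac:(lra)).
  apply Rle_lt_trans with (e / 2); [|lra]. apply c0_norm_le; [lra|]. intros m.
  rewrite iter_Fw. destruct (Nat.ltb_spec m (nk k)); [rewrite Rabs_R0; lra|].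
  set (j := (m - nk k)%nat). replace (j + 1)%nat with (S j) by lia.
  destruct (div_window_bound k j (y j) ltac:(lia)) as [Benl Bshr].
  destruct (Nat.lt_ge_cases j (s (2*k+1))) as [Hj|Hj].
  - eapply Rle_trans; [exact (Bshr Hj)|].
    assert (Hb : 2 * B < e * 2 ^ k).
    { replace (2 * B) with (2 * B / e * e) by (field; lra). nra. }
    specialize (HB' j). apply (Rmult_le_reg_l (2 ^ k)); [lra|].
    rewrite <- Rmult_assoc, Rinv_r, Rmult_1_l by lra. nra.
  - specialize (HNy j ltac:(lia)). lra.
Qed.

Lemma c0_correction_small u y : inX C0 u -> inX C0 y -> forall e, 0 < e ->
  exists K, forall k, (K <= k)%nat -> normX C0 (correction u y k) < e.
Proof.
  intros Hu Hy e He.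
  destruct (c0_iter_Fw_small y Hy (e / 2) ltac:(lra)) as [K1 HK1].
  destruct (c0_eventually u Hu (e / 4) ltac:(lra)) as [Nu HNu].
  exists (Nat.max 1 (Nat.max K1 Nu)). intros k Hk. destruct (nk_ge k ltac:(lia)).
  assert (Htr : normX C0 (truncate (nk k) u) <= e / 4).
  { apply c0_norm_le; [lra|]. intros m. unfold truncate.
    destruct (Nat.ltb_spec m (nk k)); [rewrite Rabs_R0; lra|]. left. apply HNu. lia. }
  eapply Rle_lt_trans; [apply c0_norm_sub; [apply (inX_iter_Fw C0)|apply (inX_truncate C0)]; easy|].
  specialize (HK1 k ltac:(lia)). lra.
Qed.

Lemma iter_Fw_small X y : valid_space X -> inX X y -> forall e, 0 < e ->
  exists K, forall k, (K <= k)%nat -> normX X (Nat.iter (nk k) Fw y) < e.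
Proof.
  destruct X as [|p]; intros Hv Hy e He; [exact (c0_iter_Fw_small y Hy e He)|].
  destruct (lp_iter_Fw_small p Hv y Hy (Rpower e p) (exp_pos _)) as [K HK].
  exists K. intros k Hk. apply lp_norm_lt; [exact Hv|exact He|exact (HK k Hk)].
Qed.

Lemma correction_small X u y : valid_space X -> inX X u -> inX X y -> forall e, 0 < e ->
  exists K, forall k, (K <= k)%nat -> normX X (correction u y k) < e.
Proof.
  destruct X as [|p]; intros Hv;
    [apply c0_correction_small|apply lp_correction_small, Hv].
Qed.

(** ** The dynamics of [B_w] *)

Lemma Bw_surjective X : valid_space X -> surjective_on X Bw.
Proof. intros Hv y Hy. exists (Fw y). split; [apply inX_Fw; assumption|apply Bw_Fw]. Qed.

Definition e0 : nat -> R := fun m => if (m =? 0)%nat then 1 else 0.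

Definition near_e0 (X : space) (x : nat -> R) : Prop :=
  inX X x /\ exists d, 0 < d /\ Rabs (x 0%nat - 1) <= /2 - d /\
                     forall n, (1 <= n)%nat -> Rabs (x n) <= /2 - d.

(** Coordinates are controlled by the norm, so [near_e0 X] is open. *)
Lemma near_e0_open X : valid_space X -> openX X (near_e0 X).
Proof.
  intros Hv. split; [intros x Hx; apply Hx|]. intros x [Hx [d [Hd [H0 Hn]]]].
  exists (d / 2). split; [lra|]. intros y Hy Hyx. split; [exact Hy|].
  assert (Hc : forall n, Rabs (y n - x n) < d / 2).
  { intros n. eapply Rle_lt_trans; [|exact Hyx].
    apply (coord_le_normX X (seq_sub y x) n Hv), inX_sub; assumption. }
  exists (d / 2). split; [lra|]. split.
  - pose proof (Rabs_triang (y 0%nat - x 0%nat) (x 0%nat - 1)) as T.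
    replace (y 0%nat - x 0%nat + (x 0%nat - 1)) with (y 0%nat - 1) in T by ring.
    specialize (Hc 0%nat). lra.
  - intros n Hn1. pose proof (Rabs_triang (y n - x n) (x n)) as T.
    replace (y n - x n + x n) with (y n) in T by ring.
    specialize (Hc n). specialize (Hn n Hn1). lra.
Qed.

Lemma near_e0_e0 X : near_e0 X e0.
Proof.
  split; [apply inX_of_tail, inX_zero|]. exists (/4). split; [lra|]. split.
  - unfold e0. simpl. rewrite Rminus_diag, Rabs_R0. lra.
  - intros n Hn. unfold e0. destruct (Nat.eqb_spec n 0); [lia|]. rewrite Rabs_R0. lra.
Qed.

(** Part (a) at the indices [n = s_(2k+1)] gives [(B_w^n x)_0 = x_n]; a sequence near [e_0]
    has [|x_n| < 1/2] while its image would need [|x_n - 1| < 1/2]. So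
    [N(near_e0, near_e0)] misses every [s_(2k+1)], and [B_w] is not mixing. *)
Lemma Bw_not_mixing X : valid_space X -> ~ mixing X Bw.
Proof.
  intros Hv Hmix.
  destruct (Hmix _ _ (near_e0_open X Hv) (near_e0_open X Hv)
              (ex_intro _ e0 (near_e0_e0 X)) (ex_intro _ e0 (near_e0_e0 X))) as [N HN].
  set (n := s (2 * S N + 1)).
  destruct (nk_ge (S N) ltac:(lia)) as [Hn _]. fold n in Hn.
  destruct (HN n ltac:(lia)) as [x [[_ [d1 [Hd1 [_ Hx]]]] [_ [d2 [Hd2 [Hy _]]]]]].
  rewrite iter_Bw, Nat.add_0_l in Hy.
  replace (M 1 n) with 1 in Hy
    by (symmetry; unfold n; replace (2 * S N + 1)%nat with (2 * N + 3)%nat by lia;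
        apply prefix_at_odd).
  rewrite Rmult_1_l in Hy. specialize (Hx n ltac:(lia)).
  pose proof (Rabs_triang (x n) (- (x n - 1))) as T. rewrite Rabs_Ropp in T.
  replace (x n + - (x n - 1)) with 1 in T by ring. rewrite Rabs_R1 in T. lra.
Qed.

(** Any [y] is hit from every nonempty open [U]: for [u] in [U], [u + correction u y k]
    lies in [U] for large [k] and is mapped onto [y] by [B_w^(n_k)]. *)
Lemma Bw_strongly_transitive X : valid_space X -> strongly_transitive X Bw.
Proof.
  intros Hv U [HU_in HU_open] [u Hu] y Hy _.
  destruct (HU_open u Hu) as [eps [Heps Hball]].
  destruct (correction_small X u y Hv (HU_in u Hu) Hy eps Heps) as [K HK].
  set (x := fun m => u m + correction u y K m).
  assert (Hdiff : seq_sub x u = correction u y K).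
  { apply functional_extensionality. intros m. unfold seq_sub, x. ring. }
  exists (nk K), x. split; [|apply iter_Bw_correction].
  apply Hball.
  - apply inX_add; [exact Hv|apply HU_in, Hu|apply inX_correction; auto].
  - rewrite Hdiff. exact (HK K (le_n K)).
Qed.

Lemma iter_Fw_tends_to_zero X x : valid_space X -> inX X x ->
  is_lim_seq (fun k => normX X (Nat.iter (nk k) Fw x)) 0.
Proof.
  intros Hv Hx. apply is_lim_seq_spec. intros [eps Heps]. simpl.
  destruct (iter_Fw_small X x Hv Hx eps Heps) as [K HK]. exists K. intros k Hk.
  rewrite Rminus_0_r, Rabs_pos_eq by (apply normX_nonneg; [exact Hv|apply inX_iter_Fw; assumption]).
  exact (HK k Hk).
Qed.

Theorem theorem1p1 :
  (* (a) *)
  (forall k : nat, (1 <= k)%nat -> M 1 (s (2 * k + 1)) = 1) /\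
  (* (b) *)
  (forall k : nat, (2 <= k)%nat ->
     (forall i : nat, (s (2 * k + 1) < i)%nat -> M i (nk k) >= / 2) /\
     (forall i : nat, (1 <= i <= s (2 * k + 1))%nat -> M i (nk k) >= 2 ^ k)) /\
  (* (c) *)
  (forall X : space, valid_space X ->
     surjective_on X Bw /\
     ~ mixing X Bw /\
     strongly_transitive X Bw /\
     (forall x, inX X x -> is_lim_seq (fun k => normX X (Nat.iter (nk k) Fw x)) 0)).
Proof.
  split; [|split].
  - intros k Hk. replace (2 * k + 1)%nat with (2 * (k - 1) + 3)%nat by lia. apply prefix_at_odd.
  - intros k Hk. split; intros i Hi; [apply window_beyond_half|apply window_large]; lia.
  - intros X Hv. split; [|split; [|split]].
    + exact (Bw_surjective X Hv).
    + exact (Bw_not_mixing X Hv).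
    + exact (Bw_strongly_transitive X Hv).
    + intros x Hx. exact (iter_Fw_tends_to_zero X x Hv Hx).
Qed.
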